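(* Under the standing assumptions below, the operator $P:Y\to Y$ satisfies $P^2=I$.
   Context: $X$ is one of $\ell^p$ ($1\le p\le\infty$), $c$, $c_0$. Standing assumptions: $(a_n)$ strictly decreasing positive reals, $a_n\to0$; $b=(b_n)\in X$ with $b_n>0$ for all $n$; $\pi_n:=2\prod_{m\ge1,\,m\ne n}\frac{1+a_m/a_n}{1-a_m/a_n}$ and $\pi\in\ell^\infty$; $\phi_{ij}:=\frac{b_i/b_j}{1+a_i/a_j}$ satisfies $\phi_{ij}\le C\mu^{|i-j|}$ for some $C>0$, $\mu\in(0,1)$. $Y:=\{(y_n)\mid(b_ny_n)\in X\}$ with $\|y\|_Y:=\|(b_ny_n)\|_X$. $P:Y\to Y$ is $(Py)_n:=\sum_{m=1}^\infty\frac{a_m\pi_my_m}{a_n+a_m}$ (matrix entries $P_{ij}=\frac{a_j\pi_j}{a_i+a_j}$); it is a bounded operator on $Y$. *)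

From Stdlib Require Import Reals Lra Lia.
From Coquelicot Require Import Coquelicot.
Open Scope R_scope.

(* Sequences are indexed by nat starting at 0 (the paper's index n >= 1
   corresponds to index n-1 here). *)

Inductive seq_space : Type :=
  | Sp_lp (p : R)
  | Sp_linf
  | Sp_c
  | Sp_c0.

Definition valid_space (X : seq_space) : Prop :=
  match X with Sp_lp p => 1 <= p | _ => True end.

(* |x|^p for real p >= 1, with the convention 0^p = 0 *)
Definition abs_pow (x p : R) : R :=
  if Req_EM_T x 0 then 0 else Rpower (Rabs x) p.

Definition in_space (X : seq_space) (x : nat -> R) : Prop :=
  match X with
  | Sp_lp p => ex_series (fun n => abs_pow (x n) p)
  | Sp_linf => exists M : R, forall n, Rabs (x n) <= M
  | Sp_c => ex_finite_lim_seq x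
  | Sp_c0 => is_lim_seq x 0
  end.

Definition in_Y (X : seq_space) (b y : nat -> R) : Prop :=
  in_space X (fun n => b n * y n).

Fixpoint pi_pprod (a : nat -> R) (n N : nat) : R :=
  match N with
  | O => 1
  | S k => pi_pprod a n k *
           (if Nat.eqb k n then 1 else (1 + a k / a n) / (1 - a k / a n))
  end.

Definition pi_seq (a : nat -> R) (n : nat) : R :=
  2 * real (Lim_seq (pi_pprod a n)).

Definition phi (a b : nat -> R) (i j : nat) : R :=
  (b i / b j) / (1 + a i / a j).

Definition Pmat (a : nat -> R) (i j : nat) : R :=
  a j * pi_seq a j / (a i + a j).

Definition Pop (a y : nat -> R) (n : nat) : R :=
  Series (fun m => Pmat a n m * y m).

From Stdlib Require Import Reals Lra Lia.
From Coquelicot Require Import Coquelicot.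
Open Scope R_scope.

(* For each N, the matrix P^N built from the first N nodes and the partial
   products of pi is an exact involution on the first N coordinates: this is a
   partial-fraction identity for the rational function
   prod_{l<N} (z + a_l)/(z - a_l).  The decay phi_ij <= C mu^|i-j| and the bound
   on pi dominate the entries of P^N, uniformly in N, by b_j/b_i times a
   geometric sequence, so Tannery's theorem gives P^2 = I entrywise in the
   limit.  Every y in Y has (b_k y_k) bounded, whatever X is, and the same
   domination then justifies exchanging the two sums in (P(Py))_n. *)

Fixpoint sum_lt (f : nat -> R) (N : nat) : R :=
  match N with O => 0 | S k => sum_lt f k + f k end.

Fixpoint prod_lt (f : nat -> R) (N : nat) : R :=
  match N with O => 1 | S k => prod_lt f k * f k end.

Fixpoint prod_lt_but (f : nat -> R) (m N : nat) : R :=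
  match N with
  | O => 1
  | S k => prod_lt_but f m k * (if Nat.eqb k m then 1 else f k)
  end.

Lemma sum_lt_ext f g N :
  (forall m, (m < N)%nat -> f m = g m) -> sum_lt f N = sum_lt g N.
Proof.
  induction N as [|N IH]; intros H; simpl; [reflexivity|].
  rewrite IH by (intros; apply H; lia). rewrite H by lia; reflexivity.
Qed.

Lemma sum_lt_plus f g N :
  sum_lt (fun m => f m + g m) N = sum_lt f N + sum_lt g N.
Proof. induction N as [|N IH]; simpl; [ring|]. rewrite IH; ring. Qed.

Lemma sum_lt_scal c f N : sum_lt (fun m => c * f m) N = c * sum_lt f N.
Proof. induction N as [|N IH]; simpl; [ring|]. rewrite IH; ring. Qed.

Lemma sum_lt_0 N : sum_lt (fun _ => 0) N = 0.
Proof. induction N as [|N IH]; simpl; [|rewrite IH]; ring. Qed.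

Lemma sum_lt_le f g N :
  (forall m, (m < N)%nat -> f m <= g m) -> sum_lt f N <= sum_lt g N.
Proof.
  induction N as [|N IH]; intros H; simpl; [lra|].
  pose proof (H N (Nat.lt_succ_diag_r N)).
  pose proof (IH (fun m Hm => H m (Nat.lt_lt_succ_r _ _ Hm))). lra.
Qed.

Lemma Rabs_sum_lt_le f N : Rabs (sum_lt f N) <= sum_lt (fun m => Rabs (f m)) N.
Proof.
  induction N as [|N IH]; simpl; [rewrite Rabs_R0; lra|].
  pose proof (Rabs_triang (sum_lt f N) (f N)). lra.
Qed.

Lemma sum_lt_nonneg f N : (forall m, 0 <= f m) -> 0 <= sum_lt f N.
Proof. intros H; induction N as [|N IH]; simpl; [lra|]. specialize (H N); lra. Qed.

Lemma sum_n_sum_lt f K : sum_n f K = sum_lt f (S K).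
Proof.
  induction K as [|K IH]; [rewrite sum_O; simpl; rewrite Rplus_0_l; reflexivity|].
  rewrite sum_Sn, IH; reflexivity.
Qed.

Lemma sum_lt_le_Series E N :
  (forall k, 0 <= E k) -> ex_series E -> sum_lt E N <= Series E.
Proof.
  intros HE0 HE.
  assert (Hinc : forall K, sum_n E K <= sum_n E (S K)).
  { intros K; rewrite sum_Sn; specialize (HE0 (S K)); unfold plus; simpl; lra. }
  destruct N as [|N].
  - simpl. pose proof (is_lim_seq_incr_compare _ _ (Series_correct E HE) Hinc O) as H0.
    rewrite sum_O in H0; specialize (HE0 O); lra.
  - rewrite <- sum_n_sum_lt.
    exact (is_lim_seq_incr_compare _ _ (Series_correct E HE) Hinc N).
Qed.

Lemma is_lim_seq_sum_lt (F : nat -> nat -> R) (l : nat -> R) M :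
  (forall m, is_lim_seq (fun N => F N m) (l m)) ->
  is_lim_seq (fun N => sum_lt (F N) M) (sum_lt l M).
Proof.
  intros H; induction M as [|M IH]; simpl; [apply is_lim_seq_const|].
  exact (is_lim_seq_plus' _ _ _ _ IH (H M)).
Qed.

Lemma is_series_sum_lt_support v M :
  (forall k, (M <= k)%nat -> v k = 0) -> is_series v (sum_lt v M).
Proof.
  intros H. change (is_lim_seq (sum_n v) (sum_lt v M)).
  apply (is_lim_seq_ext_loc (fun _ => sum_lt v M)); [|apply is_lim_seq_const].
  exists M; intros K HK. rewrite sum_n_sum_lt.
  induction HK as [|K HK IH].
  - change (sum_lt v M = sum_lt v M + v M). rewrite H by lia; ring.
  - change (sum_lt v M = sum_lt v (S K) + v (S K)). rewrite <- IH, H by lia; ring.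
Qed.

Lemma is_series_sum_lt (F : nat -> nat -> R) (s : nat -> R) N :
  (forall m, is_series (F m) (s m)) ->
  is_series (fun k => sum_lt (fun m => F m k) N) (sum_lt s N).
Proof.
  intros H; induction N as [|N IH]; simpl.
  - apply (is_series_sum_lt_support (fun _ => 0) O); reflexivity.
  - exact (is_series_plus _ _ _ _ IH (H N)).
Qed.

Lemma prod_lt_but_ext f g m N :
  (forall l, (l < N)%nat -> l <> m -> f l = g l) ->
  prod_lt_but f m N = prod_lt_but g m N.
Proof.
  induction N as [|N IH]; intros H; simpl; [reflexivity|].
  rewrite IH by (intros; apply H; lia).
  destruct (Nat.eqb_spec N m); [reflexivity|]. rewrite H by lia; reflexivity.
Qed.

Lemma prod_lt_but_small f m N : (N <= m)%nat -> prod_lt_but f m N = prod_lt f N.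
Proof.
  induction N as [|N IH]; intros H; simpl; [reflexivity|].
  destruct (Nat.eqb_spec N m); [lia|]. rewrite IH by lia; reflexivity.
Qed.

Lemma prod_lt_split f m N : (m < N)%nat -> prod_lt f N = prod_lt_but f m N * f m.
Proof.
  induction N as [|N IH]; intros H; simpl; [lia|].
  destruct (Nat.eqb_spec N m) as [->|Hm].
  - rewrite prod_lt_but_small by lia; ring.
  - rewrite IH by lia; ring.
Qed.

Lemma prod_lt_eq0 f j N : (j < N)%nat -> f j = 0 -> prod_lt f N = 0.
Proof. intros Hj Hf. rewrite (prod_lt_split f j N Hj), Hf; ring. Qed.

Lemma prod_lt_but_mul_eq1 f g m N :
  (forall l, (l < N)%nat -> l <> m -> f l * g l = 1) ->
  prod_lt_but f m N * prod_lt_but g m N = 1.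
Proof.
  induction N as [|N IH]; intros H; simpl; [ring|].
  destruct (Nat.eqb_spec N m).
  - rewrite !Rmult_1_r; apply IH; intros; apply H; lia.
  - transitivity (prod_lt_but f m N * prod_lt_but g m N * (f N * g N)); [ring|].
    rewrite IH by (intros; apply H; lia). rewrite H by lia; ring.
Qed.

Lemma prod_lt_but_update f g m n N :
  (n < N)%nat -> n <> m -> (forall l, l <> n -> g l = f l) -> f n <> 0 ->
  prod_lt_but g m N = prod_lt_but f m N / f n * g n.
Proof.
  induction N as [|N IH]; intros Hn Hnm Hfg Hf; simpl; [lia|].
  destruct (Nat.eq_dec N n) as [->|HN].
  - destruct (Nat.eqb_spec n m); [contradiction|].
    rewrite (prod_lt_but_ext g f) by (intros; apply Hfg; lia). field; exact Hf.
  - rewrite IH by (auto; lia).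
    destruct (Nat.eqb_spec N m); [|rewrite (Hfg N HN)]; field; exact Hf.
Qed.

Lemma prod_lt_partial_fractions (al ga x : nat -> R) N z :
  (forall i j, (i < N)%nat -> (j < N)%nat -> i <> j -> x i <> x j) ->
  (forall l, (l < N)%nat -> z <> x l) ->
  prod_lt (fun l => al l + ga l / (z - x l)) N =
  prod_lt al N +
  sum_lt (fun m => ga m * prod_lt_but (fun l => al l + ga l / (x m - x l)) m N
                     / (z - x m)) N.
Proof.
  revert z; induction N as [|N IH]; intros z Hx Hz; simpl; [ring|].
  assert (Hx' : forall i j, (i < N)%nat -> (j < N)%nat -> i <> j -> x i <> x j)
    by (intros; apply Hx; lia).
  set (r := fun m => ga m * prod_lt_but (fun l => al l + ga l / (x m - x l)) m N).
  assert (Hres : prod_lt (fun l => al l + ga l / (x N - x l)) N =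
                 prod_lt al N + sum_lt (fun m => r m / (x N - x m)) N)
    by (apply IH; [exact Hx'|intros l Hl; apply Hx; lia]).
  rewrite prod_lt_but_small, Nat.eqb_refl by lia.
  rewrite (sum_lt_ext _ (fun m => al N * (r m / (z - x m)) +
             ga N / (z - x N) * (r m / (z - x m)) +
             - (ga N / (z - x N)) * (r m / (x N - x m)))).
  2:{ intros m Hm. unfold r. destruct (Nat.eqb_spec N m); [lia|].
      assert (z - x m <> 0) by (specialize (Hz m ltac:(lia)); lra).
      assert (z - x N <> 0) by (specialize (Hz N ltac:(lia)); lra).
      assert (x N - x m <> 0) by (specialize (Hx N m ltac:(lia) ltac:(lia) ltac:(lia)); lra).
      assert (x m - x N <> 0) by lra.
      field; repeat split; assumption. }
  rewrite IH by (auto; intros; apply Hz; lia).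
  rewrite !sum_lt_plus, !sum_lt_scal, Hres. unfold r; cbv beta. unfold Rdiv; ring.
Qed.

Definition Ptrunc (a : nat -> R) (N i j : nat) : R :=
  a j * (2 * pi_pprod a j N) / (a i + a j).

Section TruncatedInvolution.

Variable a : nat -> R.
Hypothesis ha_pos : forall n, 0 < a n.
Hypothesis ha_inj : forall i j, i <> j -> a i <> a j.

Lemma pi_pprod_cauchy m N :
  pi_pprod a m N = prod_lt_but (fun l => 1 + 2 * a l / (a m - a l)) m N.
Proof.
  induction N as [|N IH]; simpl; [reflexivity|]. rewrite IH.
  destruct (Nat.eqb_spec N m); [reflexivity|]. f_equal.
  pose proof (ha_pos m); pose proof (ha_inj N m n).
  assert (1 - a N / a m <> 0).
  { replace (1 - a N / a m) with ((a m - a N) / a m) by (field; lra).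
    apply Rmult_integral_contrapositive_currified; [lra|apply Rinv_neq_0_compat; lra]. }
  field; split; lra.
Qed.

Lemma trunc_residue N n m : (n < N)%nat -> (m < N)%nat ->
  (if Nat.eqb m n then 1 else 2 * a m) *
  prod_lt_but (fun l => (if Nat.eqb l n then 0 else 1) +
                        (if Nat.eqb l n then 1 else 2 * a l) / (a m - a l)) m N =
  2 * a m * pi_pprod a m N / (a m + a n).
Proof.
  intros Hn Hm. rewrite pi_pprod_cauchy. pose proof (ha_pos n); pose proof (ha_pos m).
  destruct (Nat.eqb_spec m n) as [->|Hmn].
  - rewrite (prod_lt_but_ext _ (fun l => 1 + 2 * a l / (a n - a l))).
    + field; lra.
    + intros l _ Hl. destruct (Nat.eqb_spec l n); [contradiction|ring].
  - pose proof (ha_inj m n Hmn).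
    assert (Hf : 1 + 2 * a n / (a m - a n) = (a m + a n) / (a m - a n)) by (field; lra).
    rewrite (prod_lt_but_update (fun l => 1 + 2 * a l / (a m - a l)) _ m n N Hn
               (not_eq_sym Hmn)).
    + rewrite Nat.eqb_refl, Hf. field; lra.
    + intros l Hl. destruct (Nat.eqb_spec l n); [contradiction|ring].
    + rewrite Hf. apply Rmult_integral_contrapositive_currified;
        [lra|apply Rinv_neq_0_compat; lra].
Qed.

(* Partial fractions of [R(z) = 1/(z - a n) * prod_{l<N, l<>n} (z + a l)/(z - a l)]
   at [z = - a k]: the residues are those of [trunc_residue], and [R(- a k)] is
   [0] for [k <> n] and [-1 / (2 a n pi_pprod a n N)] for [k = n]. *)
Lemma Ptrunc_square N n k : (n < N)%nat -> (k < N)%nat ->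
  sum_lt (fun m => Ptrunc a N n m * Ptrunc a N m k) N = if Nat.eqb n k then 1 else 0.
Proof.
  intros Hn Hk.
  set (al := fun l => if Nat.eqb l n then 0 else 1).
  set (ga := fun l => if Nat.eqb l n then 1 else 2 * a l).
  pose proof (prod_lt_partial_fractions al ga a N (- a k)
    (fun i j _ _ => ha_inj i j)
    (fun l _ => ltac:(pose proof (ha_pos l); pose proof (ha_pos k); lra))) as Hpf.
  rewrite (prod_lt_eq0 al n) in Hpf by (auto; unfold al; rewrite Nat.eqb_refl; reflexivity).
  rewrite (sum_lt_ext _ (fun m => 2 * a m * pi_pprod a m N / (a m + a n) / (- a k - a m)))
    in Hpf by (intros m Hm; unfold ga, al; rewrite trunc_residue by assumption; reflexivity).
  rewrite (sum_lt_ext _ (fun m => - (2 * a k * pi_pprod a k N) *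
             (2 * a m * pi_pprod a m N / (a m + a n) / (- a k - a m)))).
  2:{ intros m _. unfold Ptrunc. pose proof (ha_pos n); pose proof (ha_pos m);
      pose proof (ha_pos k). field; repeat split; lra. }
  rewrite sum_lt_scal, <- (Rplus_0_l (sum_lt _ N)), <- Hpf.
  pose proof (ha_pos n); pose proof (ha_pos k).
  destruct (Nat.eqb_spec n k) as [<-|Hnk].
  - rewrite (prod_lt_split _ n N Hn). unfold al at 2, ga at 2. rewrite Nat.eqb_refl.
    rewrite (prod_lt_but_ext _ (fun l => 1 + 2 * a l / (- a n - a l))).
    2:{ intros l _ Hl. unfold al, ga. destruct (Nat.eqb_spec l n); [contradiction|ring]. }
    rewrite pi_pprod_cauchy.
    pose proof (prod_lt_but_mul_eq1 (fun l => 1 + 2 * a l / (a n - a l))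
                  (fun l => 1 + 2 * a l / (- a n - a l)) n N) as Hinv.
    transitivity (prod_lt_but (fun l => 1 + 2 * a l / (a n - a l)) n N *
                  prod_lt_but (fun l => 1 + 2 * a l / (- a n - a l)) n N); [field; lra|].
    apply Hinv. intros l _ Hl. pose proof (ha_pos l); pose proof (ha_inj n l (not_eq_sym Hl)).
    field; split; lra.
  - rewrite (prod_lt_eq0 _ k N Hk); [ring|].
    unfold al, ga. destruct (Nat.eqb_spec k n); [congruence|]. field; lra.
Qed.

End TruncatedInvolution.

Lemma ex_series_Rabs_le (f E : nat -> R) :
  (forall k, Rabs (f k) <= E k) -> ex_series E -> ex_series f.
Proof. intros H HE. exact (ex_series_le f E H HE). Qed.

Lemma Rabs_Series_le_head (h E : nat -> R) M :
  (forall k, Rabs (h k) <= E k) -> ex_series E ->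
  Rabs (Series h) <= sum_lt (fun k => Rabs (h k)) M + (Series E - sum_lt E M).
Proof.
  intros HhE HE.
  assert (HE0 : forall k, 0 <= E k)
    by (intros k; pose proof (Rabs_pos (h k)); specialize (HhE k); lra).
  assert (Hh : ex_series h) by exact (ex_series_Rabs_le h E HhE HE).
  set (B := sum_lt (fun k => Rabs (h k)) M + (Series E - sum_lt E M)).
  change (Rbar_le (Rabs (Series h)) B).
  apply (is_lim_seq_le_loc (fun K => Rabs (sum_n h K)) (fun _ => B)).
  - exists M; intros K HK. rewrite sum_n_sum_lt.
    eapply Rle_trans; [apply Rabs_sum_lt_le|].
    assert (Htail : sum_lt (fun k => Rabs (h k)) (S K) - sum_lt (fun k => Rabs (h k)) M
                    <= sum_lt E (S K) - sum_lt E M).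
    { assert (HKM : (M <= S K)%nat) by lia. clear HK.
      induction HKM as [|K' HK IH]; [lra|]. simpl. specialize (HhE K'). lra. }
    pose proof (sum_lt_le_Series E (S K) HE0 HE). unfold B; lra.
  - exact (is_lim_seq_abs (sum_n h) (Series h) (Series_correct h Hh)).
  - apply is_lim_seq_const.
Qed.

Lemma is_lim_seq_Series_dominated (f : nat -> nat -> R) (g E : nat -> R) :
  (forall k, is_lim_seq (fun N => f N k) (g k)) ->
  (forall N k, Rabs (f N k) <= E k) -> ex_series E ->
  is_lim_seq (fun N => Series (f N)) (Series g).
Proof.
  intros Hlim Hdom HE.
  assert (HgE : forall k, Rabs (g k) <= E k).
  { intros k. change (Rbar_le (Rabs (g k)) (E k)).
    apply (is_lim_seq_le (fun N => Rabs (f N k)) (fun _ => E k)); auto.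
    - exact (is_lim_seq_abs _ _ (Hlim k)).
    - apply is_lim_seq_const. }
  assert (Hdiff : forall N k, Rabs (f N k - g k) <= 2 * E k).
  { intros N k. pose proof (Rabs_triang (f N k) (- g k)) as Ht. rewrite Rabs_Ropp in Ht.
    specialize (Hdom N k); specialize (HgE k); unfold Rminus; lra. }
  assert (H2E : ex_series (fun k => 2 * E k)) by exact (ex_series_scal_l 2 E HE).
  apply is_lim_seq_spec; intros eps.
  destruct (proj2 (is_lim_seq_spec (sum_n E) (Series E)) (Series_correct E HE)
                                  (pos_div_2 (pos_div_2 eps)))
    as [K0 HK0].
  specialize (HK0 K0 (le_n _)). rewrite sum_n_sum_lt in HK0.
  remember (S K0) as M eqn:HM; clear K0 HM.
  assert (Hz : forall k, is_lim_seq (fun N => Rabs (f N k - g k)) 0).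
  { intros k. replace (Finite 0) with (Rbar_abs (Rbar_minus (g k) (g k)))
      by (simpl; rewrite Rplus_opp_r, Rabs_R0; reflexivity).
    apply is_lim_seq_abs, is_lim_seq_minus'; [apply Hlim|apply is_lim_seq_const]. }
  pose proof (is_lim_seq_sum_lt _ (fun _ => 0) M Hz) as Hhead.
  rewrite sum_lt_0 in Hhead. apply is_lim_seq_spec in Hhead.
  destruct (Hhead (pos_div_2 eps)) as [N0 HN0].
  exists N0; intros N HN. specialize (HN0 N HN).
  rewrite <- Series_minus by (apply (ex_series_Rabs_le _ E); auto).
  pose proof (Rabs_Series_le_head (fun k => f N k - g k) (fun k => 2 * E k) M
                (Hdiff N) H2E) as Hbound.
  rewrite Series_scal_l, sum_lt_scal in Hbound.
  apply Rabs_def2 in HK0.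
  rewrite Rminus_0_r, Rabs_pos_eq in HN0 by (apply sum_lt_nonneg; intros; apply Rabs_pos).
  simpl in HK0, HN0. lra.
Qed.

Lemma is_lim_seq_sum_lt_dominated (f : nat -> nat -> R) (g E : nat -> R) :
  (forall k, is_lim_seq (fun N => f N k) (g k)) ->
  (forall N k, Rabs (f N k) <= E k) -> ex_series E ->
  is_lim_seq (fun N => sum_lt (f N) N) (Series g).
Proof.
  intros Hlim Hdom HE.
  set (f' := fun N k => if Nat.ltb k N then f N k else 0).
  apply (is_lim_seq_ext (fun N => Series (f' N))).
  - intros N. apply is_series_unique.
    rewrite (sum_lt_ext (f N) (f' N)) by (intros k Hk; unfold f';
      destruct (Nat.ltb_spec k N); [reflexivity|lia]).
    apply is_series_sum_lt_support. intros k Hk. unfold f'.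
    destruct (Nat.ltb_spec k N); [lia|reflexivity].
  - apply (is_lim_seq_Series_dominated f' g E); [| |exact HE].
    + intros k. apply (is_lim_seq_ext_loc (fun N => f N k)); [|apply Hlim].
      exists (S k); intros N HN. unfold f'. destruct (Nat.ltb_spec k N); [reflexivity|lia].
    + intros N k. unfold f'. destruct (Nat.ltb k N); [apply Hdom|].
      rewrite Rabs_R0. pose proof (Rabs_pos (f O k)); pose proof (Hdom O k); lra.
Qed.

Lemma is_series_Series_swap (F : nat -> nat -> R) (u v : nat -> R) :
  (forall m, 0 <= u m) -> (forall k, 0 <= v k) ->
  (forall m k, Rabs (F m k) <= u m * v k) -> ex_series u -> ex_series v ->
  is_series (fun m => Series (F m)) (Series (fun k => Series (fun m => F m k))).
Proof.
  intros Hu0 Hv0 HF Hu Hv.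
  assert (HFm : forall m, ex_series (F m))
    by (intros m; exact (ex_series_Rabs_le _ _ (HF m) (ex_series_scal_l (u m) v Hv))).
  assert (HFk : forall k, ex_series (fun m => F m k)).
  { intros k. apply (ex_series_Rabs_le _ (fun m => v k * u m)).
    - intros m. rewrite Rmult_comm. apply HF.
    - exact (ex_series_scal_l (v k) u Hu). }
  set (f := fun N k => sum_lt (fun m => F m k) N).
  assert (Hf : forall N, Series (f N) = sum_lt (fun m => Series (F m)) N).
  { intros N. apply is_series_unique, is_series_sum_lt. intros m. apply Series_correct, HFm. }
  assert (Hlim : is_lim_seq (fun N => Series (f N)) (Series (fun k => Series (fun m => F m k)))).
  { apply (is_lim_seq_Series_dominated f _ (fun k => Series u * v k)).
    - intros k. apply is_lim_seq_incr_1.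
      apply (is_lim_seq_ext (sum_n (fun m => F m k))); [intros N; apply sum_n_sum_lt|].
      apply (Series_correct _ (HFk k)).
    - intros N k. unfold f. eapply Rle_trans; [apply Rabs_sum_lt_le|].
      eapply Rle_trans; [apply (sum_lt_le _ (fun m => v k * u m)); intros m _;
        rewrite Rmult_comm; apply HF|].
      rewrite sum_lt_scal, Rmult_comm. apply Rmult_le_compat_r; [apply Hv0|].
      apply sum_lt_le_Series; assumption.
    - exact (ex_series_scal_l (Series u) v Hv). }
  apply is_lim_seq_incr_1 in Hlim.
  apply (is_lim_seq_ext _ _ _ (fun N => eq_trans (Hf (S N)) (eq_sym (sum_n_sum_lt _ N))) Hlim).
Qed.

Definition nat_dist (i j : nat) : nat := Nat.max i j - Nat.min i j.

Lemma pow_le_decr q e1 e2 : 0 <= q <= 1 -> (e2 <= e1)%nat -> q ^ e1 <= q ^ e2.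
Proof.
  intros Hq He. replace e1 with (e1 - e2 + e2)%nat by lia. rewrite pow_add.
  pose proof (pow_incr q 1 (e1 - e2) Hq). rewrite pow1 in H.
  pose proof (pow_le q e2 (proj1 Hq)). nra.
Qed.

Lemma pow_nat_dist_le q i j : 0 < q <= 1 -> q ^ nat_dist i j <= q ^ j / q ^ i.
Proof.
  intros Hq. pose proof (pow_lt q i (proj1 Hq)).
  apply (Rmult_le_reg_r (q ^ i)); [assumption|].
  replace (q ^ j / q ^ i * q ^ i) with (q ^ j) by (field; lra).
  rewrite <- pow_add. apply pow_le_decr; [lra|]. unfold nat_dist; lia.
Qed.

Lemma pow_sq_nat_dist_le q n m k : 0 < q <= 1 ->
  (q ^ 2) ^ nat_dist n m * (q ^ 2) ^ nat_dist m k <= q ^ nat_dist n m * q ^ nat_dist n k.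
Proof.
  intros Hq. rewrite <- !pow_mult, <- !pow_add. apply pow_le_decr; [lra|].
  unfold nat_dist; lia.
Qed.

Lemma Rabs_cauchy_factor_ge1 x y : 0 < x -> 0 < y -> x <> y ->
  1 <= Rabs ((1 + x / y) / (1 - x / y)).
Proof.
  intros Hx Hy Hxy.
  replace ((1 + x / y) / (1 - x / y)) with ((y + x) / (y - x)).
  2:{ field. split; [lra|]. intros E. apply Hxy.
      apply (Rmult_eq_reg_r (/ y)); [|apply Rinv_neq_0_compat; lra].
      rewrite Rinv_r by lra. unfold Rdiv in E. lra. }
  assert (0 < Rabs (y - x)) by (apply Rabs_pos_lt; lra).
  unfold Rdiv. rewrite Rabs_mult, Rabs_inv, (Rabs_pos_eq (y + x)) by lra.
  apply (Rmult_le_reg_r (Rabs (y - x))); [assumption|].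
  rewrite Rmult_assoc, Rinv_l, Rmult_1_l, Rmult_1_r by lra.
  apply Rabs_le; lra.
Qed.

Lemma is_lim_seq_pi_pprod a m :
  ex_finite_lim_seq (pi_pprod a m) -> is_lim_seq (pi_pprod a m) (pi_seq a m / 2).
Proof.
  intros [l Hl]. unfold pi_seq. rewrite (is_lim_seq_unique _ _ Hl). simpl.
  replace (2 * l / 2) with l by field. exact Hl.
Qed.

(* Every factor of [pi_pprod a m] has modulus at least 1, so the partial
   products increase in modulus towards [|pi_seq a m| / 2]. *)
Lemma Rabs_pi_pprod_le a m N :
  (forall n, 0 < a n) -> (forall i j, i <> j -> a i <> a j) ->
  ex_finite_lim_seq (pi_pprod a m) -> Rabs (2 * pi_pprod a m N) <= Rabs (pi_seq a m).
Proof.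
  intros Hpos Hinj Hcv.
  pose proof (is_lim_seq_abs _ _ (is_lim_seq_pi_pprod a m Hcv)) as Habs. simpl in Habs.
  assert (Hinc : forall K, Rabs (pi_pprod a m K) <= Rabs (pi_pprod a m (S K))).
  { intros K. simpl. destruct (Nat.eqb_spec K m); [rewrite Rmult_1_r; lra|].
    rewrite Rabs_mult.
    pose proof (Rabs_cauchy_factor_ge1 (a K) (a m) (Hpos K) (Hpos m) (Hinj K m n)).
    pose proof (Rabs_pos (pi_pprod a m K)). nra. }
  pose proof (is_lim_seq_incr_compare _ _ Habs Hinc N) as HN.
  rewrite Rabs_mult, Rabs_pos_eq by lra. unfold Rdiv in HN.
  rewrite Rabs_mult, Rabs_inv, (Rabs_pos_eq 2) in HN by lra. lra.
Qed.

Lemma bounded_of_eventually_bounded (x : nat -> R) B N0 :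
  (forall k, (N0 <= k)%nat -> Rabs (x k) <= B) -> exists K, forall k, Rabs (x k) <= K.
Proof.
  revert B; induction N0 as [|N0 IH]; intros B HB.
  - exists B; intros k; apply HB; lia.
  - apply (IH (Rmax B (Rabs (x N0)))). intros k Hk.
    destruct (Nat.eq_dec k N0) as [->|]; [apply Rmax_r|].
    eapply Rle_trans; [apply HB; lia|apply Rmax_l].
Qed.

Lemma is_lim_seq_bounded (x : nat -> R) (l : R) :
  is_lim_seq x l -> exists K, forall k, Rabs (x k) <= K.
Proof.
  intros Hl. apply is_lim_seq_spec in Hl. destruct (Hl (mkposreal 1 Rlt_0_1)) as [N0 HN0].
  apply (bounded_of_eventually_bounded x (Rabs l + 1) N0). intros k Hk.
  specialize (HN0 k Hk). simpl in HN0. pose proof (Rabs_triang_inv (x k) l). lra.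
Qed.

Lemma in_space_bounded X x : valid_space X -> in_space X x ->
  exists K, forall k, Rabs (x k) <= K.
Proof.
  destruct X as [p| | |]; simpl; intros HX Hx.
  - apply ex_series_lim_0, is_lim_seq_spec in Hx.
    destruct (Hx (mkposreal 1 Rlt_0_1)) as [N0 HN0].
    apply (bounded_of_eventually_bounded x 1 N0). intros k Hk.
    specialize (HN0 k Hk). simpl in HN0. unfold abs_pow in HN0.
    destruct (Req_EM_T (x k) 0) as [->|Hxk]; [rewrite Rabs_R0; lra|].
    destruct (Rle_lt_dec (Rabs (x k)) 1) as [|Hgt]; [assumption|exfalso].
    pose proof (Rpower_lt (Rabs (x k)) 0 p Hgt ltac:(lra)) as Hpow.
    rewrite Rpower_O in Hpow by lra.
    rewrite Rminus_0_r, Rabs_pos_eq in HN0 by (left; apply exp_pos). lra.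
  - destruct Hx as [M HM]. exists M; exact HM.
  - destruct Hx as [l Hl]. exact (is_lim_seq_bounded x l Hl).
  - exact (is_lim_seq_bounded x 0 Hx).
Qed.

Lemma ex_series_scal_geom c q : 0 < q < 1 -> ex_series (fun k => c * q ^ k).
Proof.
  intros Hq. apply (ex_series_scal_l c (fun k => q ^ k)), ex_series_geom.
  rewrite Rabs_pos_eq; lra.
Qed.

Lemma strict_decr_inj (a : nat -> R) :
  (forall n, a (S n) < a n) -> forall i j, i <> j -> a i <> a j.
Proof.
  intros Hdec.
  assert (Hlt : forall i j, (i < j)%nat -> a j < a i).
  { intros i j Hij. induction Hij as [|j Hij IH]; [apply Hdec|].
    specialize (Hdec j); lra. }
  intros i j Hij. destruct (Nat.lt_gt_cases i j) as [[H|H] _]; [exact Hij| |];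
    specialize (Hlt _ _ H); lra.
Qed.

Lemma is_series_kronecker (y : nat -> R) n :
  is_series (fun k => (if Nat.eqb n k then 1 else 0) * y k) (y n).
Proof.
  replace (y n) with (sum_lt (fun k => (if Nat.eqb n k then 1 else 0) * y k) (S n)).
  - apply is_series_sum_lt_support. intros k Hk.
    destruct (Nat.eqb_spec n k); [lia|ring].
  - simpl. rewrite Nat.eqb_refl, (sum_lt_ext _ (fun _ => 0)), sum_lt_0; [ring|].
    intros k Hk. destruct (Nat.eqb_spec n k); [lia|ring].
Qed.

Section WeightedBounds.

Variables (a b : nat -> R) (M C mu : R).
Hypothesis ha_pos : forall n, 0 < a n.
Hypothesis hb_pos : forall n, 0 < b n.
Hypothesis hmu : 0 < mu < 1.
Hypothesis hphi : forall i j, phi a b i j <= C * mu ^ nat_dist i j.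

Lemma entry_bound i j v : Rabs v <= M ->
  Rabs (a j * v / (a i + a j)) <= M * C * mu ^ nat_dist i j * b j / b i.
Proof.
  intros Hv. pose proof (ha_pos i); pose proof (ha_pos j).
  pose proof (hb_pos i); pose proof (hb_pos j).
  assert (Hratio : 0 <= b j / b i) by (apply Rle_mult_inv_pos; lra).
  assert (Hphi0 : 0 <= phi a b i j).
  { unfold phi. apply Rle_mult_inv_pos; [apply Rle_mult_inv_pos; lra|].
    pose proof (Rdiv_lt_0_compat (a i) (a j)); lra. }
  replace (a j * v / (a i + a j)) with (v * (phi a b i j * (b j / b i)))
    by (unfold phi; field; repeat split; lra).
  rewrite Rabs_mult, (Rabs_pos_eq (phi a b i j * _)) by (apply Rmult_le_pos; assumption).
  apply Rle_trans with (M * (C * mu ^ nat_dist i j * (b j / b i))).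
  - apply Rmult_le_compat; [apply Rabs_pos|apply Rmult_le_pos; assumption|exact Hv|].
    apply Rmult_le_compat_r; [assumption|apply hphi].
  - right; field; lra.
Qed.

(* [mu = sqrt mu ^ 2] and the triangle inequality for [nat_dist] split the decay
   of a product of two entries into a geometric factor in each index. *)
Lemma entry_pair_bound n m k x y :
  Rabs x <= M * C * mu ^ nat_dist n m * b m / b n ->
  Rabs y <= M * C * mu ^ nat_dist m k * b k / b m ->
  Rabs (x * y) <=
    (M * C) ^ 2 / (b n * sqrt mu ^ n * sqrt mu ^ n) * (b k * sqrt mu ^ k) * sqrt mu ^ m.
Proof.
  intros Hx Hy. set (nu := sqrt mu).
  assert (Hnu : 0 < nu <= 1).
  { unfold nu. split; [apply sqrt_lt_R0; lra|].
    rewrite <- sqrt_1. apply sqrt_le_1_alt; lra. }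
  assert (Hmu : mu = nu ^ 2) by (unfold nu; rewrite pow2_sqrt; lra).
  pose proof (hb_pos n); pose proof (hb_pos m); pose proof (hb_pos k).
  pose proof (pow_lt nu n (proj1 Hnu)).
  set (c := (M * C) ^ 2 * (b k / b n)).
  assert (Hc : 0 <= c) by (apply Rmult_le_pos; [apply pow2_ge_0|apply Rle_mult_inv_pos; lra]).
  rewrite Rabs_mult. eapply Rle_trans.
  { apply Rmult_le_compat; [apply Rabs_pos|apply Rabs_pos|exact Hx|exact Hy]. }
  replace (M * C * mu ^ nat_dist n m * b m / b n * (M * C * mu ^ nat_dist m k * b k / b m))
    with (c * (mu ^ nat_dist n m * mu ^ nat_dist m k)) by (unfold c; field; lra).
  replace ((M * C) ^ 2 / (b n * nu ^ n * nu ^ n) * (b k * nu ^ k) * nu ^ m)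
    with (c * ((nu ^ m / nu ^ n) * (nu ^ k / nu ^ n))) by (unfold c; field; lra).
  apply Rmult_le_compat_l; [exact Hc|]. rewrite Hmu.
  eapply Rle_trans; [apply pow_sq_nat_dist_le; exact Hnu|].
  pose proof (pow_lt nu (nat_dist n m) (proj1 Hnu)).
  pose proof (pow_lt nu (nat_dist n k) (proj1 Hnu)).
  apply Rmult_le_compat; try lra; apply pow_nat_dist_le; exact Hnu.
Qed.

Hypothesis ha_inj : forall i j, i <> j -> a i <> a j.
Hypothesis hpi_cv : forall n, ex_finite_lim_seq (pi_pprod a n).
Hypothesis hpi_bdd : forall n, Rabs (pi_seq a n) <= M.

Lemma Pmat_bound i j : Rabs (Pmat a i j) <= M * C * mu ^ nat_dist i j * b j / b i.
Proof. apply entry_bound, hpi_bdd. Qed.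

Lemma Ptrunc_bound N i j : Rabs (Ptrunc a N i j) <= M * C * mu ^ nat_dist i j * b j / b i.
Proof.
  apply entry_bound. eapply Rle_trans; [apply Rabs_pi_pprod_le; auto|apply hpi_bdd].
Qed.

Lemma is_lim_seq_Ptrunc i j : is_lim_seq (fun N => Ptrunc a N i j) (Pmat a i j).
Proof.
  pose proof (ha_pos i); pose proof (ha_pos j).
  apply (is_lim_seq_ext (fun N => (2 * a j / (a i + a j)) * pi_pprod a j N)).
  { intros N. unfold Ptrunc. field. lra. }
  replace (Pmat a i j) with (2 * a j / (a i + a j) * (pi_seq a j / 2))
    by (unfold Pmat; field; lra).
  apply (is_lim_seq_scal_l _ _ (pi_seq a j / 2)), is_lim_seq_pi_pprod, hpi_cv.
Qed.

Lemma sqrt_mu_bounds : 0 < sqrt mu < 1.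
Proof. split; [apply sqrt_lt_R0; lra|rewrite <- sqrt_1; apply sqrt_lt_1_alt; lra]. Qed.

Lemma is_series_Pmat_square n k :
  is_series (fun m => Pmat a n m * Pmat a m k) (if Nat.eqb n k then 1 else 0).
Proof.
  set (c := (M * C) ^ 2 / (b n * sqrt mu ^ n * sqrt mu ^ n) * (b k * sqrt mu ^ k)).
  set (g := fun m => Pmat a n m * Pmat a m k).
  assert (HE : ex_series (fun m => c * sqrt mu ^ m))
    by exact (ex_series_scal_geom c _ sqrt_mu_bounds).
  assert (Hg : ex_series g) by (apply (ex_series_Rabs_le _ _ (fun m =>
    entry_pair_bound n m k _ _ (Pmat_bound n m) (Pmat_bound m k)) HE)).
  pose proof (is_lim_seq_sum_lt_dominated (fun N m => Ptrunc a N n m * Ptrunc a N m k) g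
    _ (fun m => is_lim_seq_mult' _ _ _ _ (is_lim_seq_Ptrunc n m) (is_lim_seq_Ptrunc m k))
    (fun N m => entry_pair_bound n m k _ _ (Ptrunc_bound N n m) (Ptrunc_bound N m k)) HE)
    as Hlim; cbv beta in Hlim.
  assert (Htrunc : is_lim_seq (fun N => sum_lt (fun m => Ptrunc a N n m * Ptrunc a N m k) N)
                     (Finite (if Nat.eqb n k then 1 else 0))).
  { apply (is_lim_seq_ext_loc (fun _ => if Nat.eqb n k then 1 else 0));
      [|apply is_lim_seq_const].
    exists (S (Nat.max n k)); intros N HN. symmetry. apply Ptrunc_square; auto; lia. }
  pose proof (is_lim_seq_unique _ _ Hlim) as Hu.
  rewrite (is_lim_seq_unique _ _ Htrunc) in Hu. injection Hu as Hu.
  pose proof (Series_correct g Hg) as Hs. rewrite <- Hu in Hs. exact Hs.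
Qed.

Variables (y : nat -> R) (K : R).
Hypothesis hC : 0 <= C.
Hypothesis hy : forall k, Rabs (b k * y k) <= K.

Lemma ex_series_Pmat_mul n : ex_series (fun m => Pmat a n m * y m).
Proof.
  pose proof (hb_pos n); pose proof (pow_lt mu n (proj1 hmu)).
  assert (HM : 0 <= M) by (pose proof (Rabs_pos (pi_seq a O)); pose proof (hpi_bdd O); lra).
  assert (HK : 0 <= K) by (pose proof (Rabs_pos (b O * y O)); pose proof (hy O); lra).
  assert (Hc : 0 <= M * C * K / b n)
    by (apply Rle_mult_inv_pos; [repeat apply Rmult_le_pos|]; assumption).
  apply (ex_series_Rabs_le _ (fun m => M * C * K / (b n * mu ^ n) * mu ^ m));
    [|apply ex_series_scal_geom; lra].
  intros m. pose proof (hb_pos m). rewrite Rabs_mult.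
  apply Rle_trans with (M * C * mu ^ nat_dist n m * b m / b n * (K / b m)).
  - apply Rmult_le_compat; [apply Rabs_pos|apply Rabs_pos|apply Pmat_bound|].
    apply (Rmult_le_reg_l (b m)); [assumption|].
    replace (b m * (K / b m)) with K by (field; lra).
    rewrite <- (Rabs_pos_eq (b m)), <- Rabs_mult by lra. apply hy.
  - replace (M * C * mu ^ nat_dist n m * b m / b n * (K / b m))
      with (M * C * K / b n * mu ^ nat_dist n m) by (field; lra).
    replace (M * C * K / (b n * mu ^ n) * mu ^ m)
      with (M * C * K / b n * (mu ^ m / mu ^ n)) by (field; lra).
    apply Rmult_le_compat_l; [assumption|]. apply pow_nat_dist_le; lra.
Qed.

Lemma is_series_Pmat_Pop n : is_series (fun m => Pmat a n m * Pop a y m) (y n).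
Proof.
  set (nu := sqrt mu).
  set (c := (M * C) ^ 2 / (b n * nu ^ n * nu ^ n)).
  assert (Hc : 0 <= c).
  { pose proof (hb_pos n); pose proof (pow_lt nu n (proj1 sqrt_mu_bounds)).
    apply Rle_mult_inv_pos; [apply pow2_ge_0|repeat apply Rmult_lt_0_compat; assumption]. }
  set (F := fun m k => Pmat a n m * Pmat a m k * y k).
  assert (HF : forall m k, Rabs (F m k) <= nu ^ m * (c * K * nu ^ k)).
  { intros m k. unfold F. rewrite Rabs_mult.
    pose proof (entry_pair_bound n m k _ _ (Pmat_bound n m) (Pmat_bound m k)) as Hpair.
    fold nu c in Hpair. pose proof (pow_le nu k (Rlt_le _ _ (proj1 sqrt_mu_bounds))).
    pose proof (pow_le nu m (Rlt_le _ _ (proj1 sqrt_mu_bounds))).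
    apply Rle_trans with (c * (b k * nu ^ k) * nu ^ m * Rabs (y k)).
    - apply Rmult_le_compat_r; [apply Rabs_pos|exact Hpair].
    - replace (c * (b k * nu ^ k) * nu ^ m * Rabs (y k))
        with (c * nu ^ k * nu ^ m * Rabs (b k * y k))
        by (rewrite Rabs_mult, (Rabs_pos_eq (b k)) by (left; apply hb_pos); ring).
      apply Rle_trans with (c * nu ^ k * nu ^ m * K); [|right; ring].
      apply Rmult_le_compat_l; [apply Rmult_le_pos; [apply Rmult_le_pos|]; assumption|apply hy]. }
  assert (Hgeom : ex_series (fun m => nu ^ m)).
  { pose proof sqrt_mu_bounds as Hnu; fold nu in Hnu.
    apply ex_series_geom. rewrite Rabs_pos_eq; lra. }
  assert (Hv : forall k, 0 <= c * K * nu ^ k).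
  { intros k. pose proof (Rabs_pos (b O * y O)); pose proof (hy O).
    apply Rmult_le_pos; [apply Rmult_le_pos; lra|].
    apply pow_le, Rlt_le, sqrt_mu_bounds. }
  pose proof (is_series_Series_swap F (fun m => nu ^ m) (fun k => c * K * nu ^ k)
    (fun m => pow_le nu m (Rlt_le _ _ (proj1 sqrt_mu_bounds))) Hv HF
    Hgeom (ex_series_scal_geom (c * K) _ sqrt_mu_bounds)) as Hswap.
  replace (y n) with (Series (fun k => Series (fun m => F m k))).
  - apply (is_series_ext (fun m => Series (F m))); [|exact Hswap].
    intros m. unfold F, Pop. rewrite <- Series_scal_l. apply Series_ext; intros k; ring.
  - rewrite (Series_ext _ (fun k => (if Nat.eqb n k then 1 else 0) * y k)).
    + apply is_series_unique, is_series_kronecker.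
    + intros k. unfold F. rewrite Series_scal_r.
      rewrite (is_series_unique _ _ (is_series_Pmat_square n k)). reflexivity.
Qed.

End WeightedBounds.

Theorem proposition5 (X : seq_space) (a b : nat -> R)
  (hX : valid_space X)
  (ha_pos : forall n, 0 < a n)
  (ha_dec : forall n, a (S n) < a n)
  (ha_lim : is_lim_seq a 0)
  (hb_pos : forall n, 0 < b n)
  (hb_X : in_space X b)
  (hpi_cv : forall n, ex_finite_lim_seq (pi_pprod a n))
  (hpi_bdd : exists M : R, forall n, Rabs (pi_seq a n) <= M)
  (hphi : exists C mu : R, 0 < C /\ 0 < mu < 1 /\
          forall i j : nat, phi a b i j <= C * mu ^ (Nat.max i j - Nat.min i j)) :
  forall y : nat -> R, in_Y X b y ->
    (forall n, ex_series (fun m => Pmat a n m * y m)) /\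
    (forall n, is_series (fun m => Pmat a n m * Pop a y m) (y n)).
Proof.
  intros y hy.
  destruct hpi_bdd as [M hM]. destruct hphi as [C [mu [hC [hmu hdecay]]]].
  destruct (in_space_bounded X _ hX hy) as [K hK].
  pose proof (strict_decr_inj a ha_dec) as ha_inj.
  split; intros n.
  - exact (ex_series_Pmat_mul a b M C mu ha_pos hb_pos hmu hdecay hM y K
             (Rlt_le _ _ hC) hK n).
  - exact (is_series_Pmat_Pop a b M C mu ha_pos hb_pos hmu hdecay ha_inj hpi_cv hM
             y K hK n).
Qed.
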